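(* As formal power series, $$\sum_{M\geq1}g(M)x^M=\frac{x-x^3}{(1-x-x^2)^2},\qquad \sum_{M\geq1}h(M)x^M=\frac{x-x^2}{(1-x-x^2)^2},$$ $$\sum_{M\geq1}g_1(M)x^M=\frac{x^2}{(1-x-x^2)^2}=\sum_{M\geq1}h_1(M)x^M.$$ In particular $g_1(M)=h_1(M)$ for all $M\geq1$.
   Context: The perimeter of a nonempty partition $\lambda$ with largest part $\lambda_1$ and $\ell(\lambda)$ parts is $\lambda_1+\ell(\lambda)-1$. $\mathcal G(M)$ is the set of partitions into odd parts with perimeter $M$, $\mathcal H(M)$ the set of partitions into distinct parts with perimeter $M$; $g(M)$ (resp. $h(M)$) is the total number of parts, summed over all partitions in $\mathcal G(M)$ (resp. $\mathcal H(M)$). $\mathcal G_1(M)$ is the set of partitions with perimeter $M$ in which exactly one distinct even integer occurs as a part (possibly with multiplicity greater than one) and all other parts are odd; $\mathcal H_1(M)$ is the set of partitions with perimeter $M$ in which exactly one part value occurs at least twice and every other part value occurs exactly once. $g_1(M)=|\mathcal G_1(M)|$, $h_1(M)=|\mathcal H_1(M)|$. *)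

From HB Require Import structures.
From mathcomp Require Import all_boot all_order all_algebra.
Set Implicit Arguments. Unset Strict Implicit. Unset Printing Implicit Defensive.
Import Order.TTheory GRing.Theory Num.Theory.

(* A partition with at most M parts, all parts <= M, written as its
   zero-padded part sequence (lambda_1, ..., lambda_M): entry i is the
   (i+1)-th largest part, or 0 if there are fewer than i+1 parts. *)
Definition ptuple (M : nat) := {ffun 'I_M -> 'I_M.+1}.

Definition is_partition M (P : ptuple M) : bool :=
  [forall i : 'I_M, forall j : 'I_M, (i <= j)%N ==> (P j <= P i)%N].

Definition nparts M (P : ptuple M) : nat := #|[set i | P i != ord0]|.
Definition largest M (P : ptuple M) : nat := \max_(i : 'I_M) (P i : nat).
Definition perimeter M (P : ptuple M) : nat := largest P + nparts P - 1.

Definition perimM M (P : ptuple M) : bool :=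
  [&& is_partition P, (0 < nparts P)%N & perimeter P == M].

Definition odd_parts M (P : ptuple M) : bool :=
  [forall i : 'I_M, (P i != ord0) ==> odd (P i)].
Definition distinct_parts M (P : ptuple M) : bool :=
  [forall i : 'I_M, forall j : 'I_M, ((P i != ord0) && (i != j)) ==> (P i != P j)].

Definition even_values M (P : ptuple M) : {set 'I_M.+1} :=
  [set v : 'I_M.+1 | [&& v != ord0, ~~ odd v & [exists i, P i == v]]].
Definition G1_prop M (P : ptuple M) : bool := #|even_values P| == 1%N.

Definition mult M (P : ptuple M) (v : 'I_M.+1) : nat := #|[set i | P i == v]|.
Definition repeated_values M (P : ptuple M) : {set 'I_M.+1} :=
  [set v : 'I_M.+1 | (v != ord0) && (2 <= mult P v)%N].
Definition H1_prop M (P : ptuple M) : bool := #|repeated_values P| == 1%N.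

Definition g (M : nat) : nat := \sum_(P : ptuple M | perimM P && odd_parts P) nparts P.
Definition h (M : nat) : nat := \sum_(P : ptuple M | perimM P && distinct_parts P) nparts P.
Definition g1 (M : nat) : nat := #|[set P : ptuple M | perimM P && G1_prop P]|.
Definition h1 (M : nat) : nat := #|[set P : ptuple M | perimM P && H1_prop P]|.

Local Open Scope ring_scope.

(* truncation (degrees 0..N) of the formal power series sum_{M>=1} a(M) x^M *)
Definition trunc_series (a : nat -> nat) (N : nat) : {poly int} :=
  \poly_(i < N.+1) (if i == 0%N then 0 else (a i)%:R).

(* "sum_{M>=1} a(M) x^M = P / Q" as formal power series (Q(0) = 1):
   Q * A = P, checked on every truncation. *)
Definition series_eq (a : nat -> nat) (Pn Q : {poly int}) : Prop :=
  forall N : nat, take_poly N.+1 (Q * trunc_series a N) = take_poly N.+1 Pn.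

Definition den : {poly int} := (1 - 'X - 'X^2) ^+ 2.

From mathcomp Require Import all_boot all_order all_algebra.
From mathcomp Require Import zify ring lra.
Set Implicit Arguments. Unset Strict Implicit. Unset Printing Implicit Defensive.
Import GRing.Theory.

(* Write a nonempty partition as the weakly decreasing list x :: t of its
   parts, so that its perimeter is x + size t.  Every partition of perimeter
   m + 2 arises exactly once from a partition of perimeter m + 1, either by
   repeating its largest part or by increasing its largest part by one.
   Following each statistic through these two moves (with a few auxiliary
   states recording how the largest part interacts with the others) yields
   linear recurrences: g(M+2) = g(M+1) + g(M) + F(M+1) and
   h(M+2) = h(M+1) + h(M) + F(M) with F the Fibonacci numbers, while g1 and h1
   both equal the self-convolution of F.  Each of these recurrences says that
   (1 - x - x^2)^2 times the generating function is a polynomial of degree at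
   most 4, which the first few values identify. *)

(** * Partitions of given perimeter as decreasing lists *)

Definition perim_part (M : nat) (s : seq nat) : bool :=
  if s is x :: t then [&& path geq x t, all (leq 1) (x :: t) & x + size t == M]
  else false.

Definition repeat_head (s : seq nat) := head 0 s :: s.
Definition bump_head (s : seq nat) := (head 0 s).+1 :: behead s.

Fixpoint perim_parts (M : nat) : seq (seq nat) :=
  match M with
  | 0 => [::]
  | 1 => [:: [:: 1]]
  | m.+1 => map repeat_head (perim_parts m) ++ map bump_head (perim_parts m)
  end.

Lemma perim_partsSS m :
  perim_parts m.+2 = map repeat_head (perim_parts m.+1) ++ map bump_head (perim_parts m.+1).
Proof. by []. Qed.

Lemma geq_trans : transitive geq.
Proof. by move=> a b c /= h1 h2; apply: leq_trans h2 h1. Qed.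

Lemma path_geq_ub x t : path geq x t -> all (geq x) t.
Proof. exact: order_path_min geq_trans. Qed.

Lemma path_geq_succ x t : path geq x t -> path geq x.+1 t.
Proof. by case: t => //= y t /andP[le_yx ->]; rewrite andbT /geq ltnW. Qed.

Lemma path_geq_succ_notin x t : path geq x t -> x.+1 \notin t.
Proof. by move=> /path_geq_ub /allP ub; apply/negP => /ub /=; rewrite ltnn. Qed.

Lemma perim_part_repeat_head m s : perim_part m.+1 s -> perim_part m.+2 (repeat_head s).
Proof.
case: s => [|x t] //= /and3P[p_xt /andP[x_gt0 t_gt0] /eqP <-].
by rewrite /geq leqnn p_xt x_gt0 t_gt0 addnS eqxx.
Qed.

Lemma perim_part_bump_head m s : perim_part m.+1 s -> perim_part m.+2 (bump_head s).
Proof.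
case: s => [|x t] //= /and3P[p_xt /andP[_ t_gt0] /eqP <-].
by rewrite path_geq_succ // t_gt0 addSn eqxx.
Qed.

Lemma perim_partSS_inv m s : perim_part m.+2 s ->
  (exists2 u, perim_part m.+1 u & s = repeat_head u) \/
  (exists2 u, perim_part m.+1 u & s = bump_head u).
Proof.
case: s => [|x t] //= /and3P[p_xt /andP[x_gt0 t_gt0] /eqP e].
have [hd_x | hd_neq] := boolP (head 0 t == x).
  left; case: t p_xt t_gt0 e hd_x => [|y w] /=; first by rewrite eq_sym gtn_eqF.
  move=> /andP[_ p_yw] /andP[_ w_gt0] e /eqP y_x; subst y.
  by exists (x :: w); rewrite //= p_yw x_gt0 w_gt0; apply/eqP; lia.
have hd_lt : head 0 t < x.
  by case: t p_xt hd_neq {t_gt0 e} => //= y w /andP[le_yx _] ne_yx; rewrite ltn_neqAle ne_yx.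
right; exists (x.-1 :: t); last by rewrite /bump_head prednK.
rewrite /= t_gt0 andbT; apply/and3P; split; last by apply/eqP; lia.
- by case: t p_xt hd_lt {t_gt0 e hd_neq} => //= y w /andP[_ ->]; rewrite andbT /geq; lia.
- by case: t t_gt0 e hd_lt {p_xt hd_neq} => [|y w] /=; [lia|move=> /andP[]; lia].
Qed.

Lemma mem_perim_parts M s : (s \in perim_parts M) = perim_part M s.
Proof.
elim: M s => [|[|m] IH] s.
- by case: s => //= -[|x] t; rewrite in_nil /= ?andbF.
- rewrite /= inE; case: s => [|x [|y t]] //=.
    by rewrite eqseq_cons andbT addn0 andbT; case: x => [|[|x]].
  rewrite eqseq_cons andbF; apply/esym/and3P.
  by move=> -[/andP[le_yx _] /and3P[_ y_gt0 _] /eqP]; lia.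
rewrite perim_partsSS mem_cat; apply/orP/idP.
  case=> /mapP[u]; rewrite IH => pu ->.
  - exact: perim_part_repeat_head.
  - exact: perim_part_bump_head.
by case/perim_partSS_inv => -[u pu ->]; [left|right]; apply: map_f; rewrite IH.
Qed.

Lemma uniq_perim_parts M : uniq (perim_parts M).
Proof.
elim: M => [|[|m] IH] //.
rewrite perim_partsSS cat_uniq; apply/and3P; split.
- by rewrite map_inj_uniq // => u v [].
- apply/hasPn => _ /mapP[u pu ->]; apply/mapP => -[v pv].
  move: pu pv; rewrite !mem_perim_parts; case: u => [|x t] //; case: v => [|y w] //=.
  by move=> /and3P[p_xt _ _] _ [y_eq t_eq]; move: p_xt; rewrite t_eq /= /geq -y_eq ltnn.
- rewrite map_inj_in_uniq // => u v; rewrite !mem_perim_parts.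
  by case: u => [|x t] //; case: v => [|y w] //= _ _ [-> ->].
Qed.

Section SumPerimParts.
Variable F : seq nat -> nat.

Lemma big_perim_partsSS m :
  \sum_(s <- perim_parts m.+2) F s =
  \sum_(s <- perim_parts m.+1) F (repeat_head s) + \sum_(s <- perim_parts m.+1) F (bump_head s).
Proof. by rewrite perim_partsSS big_cat !big_map. Qed.

Lemma eq_big_perim_parts (G : seq nat -> nat) M :
  (forall x t, path geq x t -> F (x :: t) = G (x :: t)) ->
  \sum_(s <- perim_parts M) F s = \sum_(s <- perim_parts M) G s.
Proof.
move=> eqFG; apply: eq_big_seq => -[|x t]; rewrite mem_perim_parts //=.
by case/and3P => p_xt _ _; apply: eqFG.
Qed.

Lemma big_perim_parts_eq0 M :
  (forall x t, path geq x t -> F (x :: t) = 0) -> \sum_(s <- perim_parts M) F s = 0.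
Proof. by move=> F0; rewrite (@eq_big_perim_parts (fun=> 0)) ?big1. Qed.

End SumPerimParts.

(** * Fibonacci recurrences *)

Fixpoint fib n := if n is n'.+1 then (if n' is n''.+1 then fib n' + fib n'' else 1) else 0.

(* fib_conv n = \sum_(i <= n) fib i * fib (n - i), the coefficient of x^n in
   x^2 / (1 - x - x^2)^2. *)
Fixpoint fib_conv n :=
  if n is n'.+1 then (if n' is n''.+1 then fib_conv n' + fib_conv n'' + fib n' else 0) else 0.

Lemma fibSS n : fib n.+2 = fib n.+1 + fib n. Proof. by []. Qed.
Lemma fib_convSS n : fib_conv n.+2 = fib_conv n.+1 + fib_conv n + fib n.+1. Proof. by []. Qed.

(* The recurrence read off (1 - x - x^2)^2 = 1 - 2x - x^2 + 2x^3 + x^4. *)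
Definition den_recurrence (a : nat -> nat) : Prop :=
  forall M, 0 < M -> a M.+4 + 2 * a M.+1 + a M = 2 * a M.+3 + a M.+2.

Lemma den_recurrence_fib_driven (a : nat -> nat) k :
  (forall n, a n.+3 = a n.+2 + a n.+1 + fib (n + k)) -> den_recurrence a.
Proof.
move=> a_rec [|m] // _; have := fibSS (m + k).
by rewrite (a_rec m.+2) (a_rec m.+1) (a_rec m) !addSn; lia.
Qed.

(** * Odd parts and distinct parts *)

Definition odd_count M := \sum_(s <- perim_parts M) nat_of_bool (all odd s).
Definition even_head_count M :=
  \sum_(s <- perim_parts M) nat_of_bool (~~ odd (head 0 s) && all odd (behead s)).
Definition odd_size M := \sum_(s <- perim_parts M) (all odd s) * size s.
Definition even_head_size M :=
  \sum_(s <- perim_parts M) (~~ odd (head 0 s) && all odd (behead s)) * size s.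

Lemma odd_countSS m : odd_count m.+2 = odd_count m.+1 + even_head_count m.+1.
Proof.
rewrite /odd_count /even_head_count big_perim_partsSS.
by congr (_ + _); apply: eq_big_perim_parts => x t _ /=; rewrite ?andbA ?andbb ?negbK.
Qed.

Lemma even_head_countSS m : even_head_count m.+2 = odd_count m.+1.
Proof.
rewrite /odd_count /even_head_count big_perim_partsSS big_perim_parts_eq0 ?add0n.
  by apply: eq_big_perim_parts => x t _ /=; rewrite negbK.
by move=> x t _ /=; case: (odd x).
Qed.

Lemma odd_sizeSS m : odd_size m.+2 = odd_size m.+1 + odd_count m.+1 + even_head_size m.+1.
Proof.
rewrite /odd_size /odd_count /even_head_size big_perim_partsSS -[in RHS]big_split.
congr (_ + _); apply: eq_big_perim_parts => x t _ /=; last by rewrite ?negbK.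
by rewrite andbA andbb; case: (_ && _) => /=; lia.
Qed.

Lemma even_head_sizeSS m : even_head_size m.+2 = odd_size m.+1.
Proof.
rewrite /odd_size /even_head_size big_perim_partsSS big_perim_parts_eq0 ?add0n.
  by apply: eq_big_perim_parts => x t _ /=; rewrite negbK.
by move=> x t _ /=; case: (odd x).
Qed.

Lemma odd_count_fib m : odd_count m.+1 = fib m.+1 /\ even_head_count m.+1 = fib m.
Proof.
elim: m => [|m [IHodd IHeven]]; first by rewrite /odd_count /even_head_count /= !big_seq1.
by rewrite odd_countSS even_head_countSS IHodd IHeven.
Qed.

Lemma odd_sizeSS_fib m : odd_size m.+3 = odd_size m.+2 + odd_size m.+1 + fib m.+2.
Proof. by rewrite odd_sizeSS even_head_sizeSS (proj1 (odd_count_fib _)) addnAC. Qed.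

Definition distinct_count M := \sum_(s <- perim_parts M) nat_of_bool (uniq s).
Definition head_twice_count M :=
  \sum_(s <- perim_parts M) nat_of_bool ((head 0 s \in behead s) && uniq (behead s)).
Definition distinct_size M := \sum_(s <- perim_parts M) (uniq s) * size s.
Definition head_twice_size M :=
  \sum_(s <- perim_parts M) ((head 0 s \in behead s) && uniq (behead s)) * size s.

Lemma distinct_countSS m : distinct_count m.+2 = distinct_count m.+1 + head_twice_count m.+1.
Proof.
rewrite /distinct_count /head_twice_count big_perim_partsSS big_perim_parts_eq0 ?add0n.
  rewrite -big_split; apply: eq_big_perim_parts => x t p_xt /=.
  by rewrite (negbTE (path_geq_succ_notin p_xt)); case: (x \in t); case: (uniq t).
by move=> x t _ /=; rewrite mem_head.
Qed.

Lemma head_twice_countSS m : head_twice_count m.+2 = distinct_count m.+1.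
Proof.
rewrite /distinct_count /head_twice_count big_perim_partsSS [X in _ + X]big_perim_parts_eq0.
  by rewrite addn0; apply: eq_big_perim_parts => x t _ /=; rewrite mem_head.
by move=> x t p_xt /=; rewrite (negbTE (path_geq_succ_notin p_xt)).
Qed.

Lemma distinct_sizeSS m : distinct_size m.+2 = distinct_size m.+1 + head_twice_size m.+1.
Proof.
rewrite /distinct_size /head_twice_size big_perim_partsSS big_perim_parts_eq0 ?add0n.
  rewrite -big_split; apply: eq_big_perim_parts => x t p_xt /=.
  by rewrite (negbTE (path_geq_succ_notin p_xt)); case: (x \in t); case: (uniq t) => /=; lia.
by move=> x t _ /=; rewrite mem_head.
Qed.

Lemma head_twice_sizeSS m : head_twice_size m.+2 = distinct_size m.+1 + distinct_count m.+1.
Proof.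
rewrite /distinct_size /head_twice_size /distinct_count big_perim_partsSS.
rewrite [X in _ + X]big_perim_parts_eq0 => [|x t p_xt]; last first.
  by rewrite /= (negbTE (path_geq_succ_notin p_xt)).
rewrite addn0 -big_split; apply: eq_big_perim_parts => x t _ /=.
by rewrite mem_head /=; case: (x \in t); case: (uniq t) => /=; lia.
Qed.

Lemma distinct_count_fib m : distinct_count m.+1 = fib m.+1 /\ head_twice_count m.+1 = fib m.
Proof.
elim: m => [|m [IHdist IHtwice]].
  by rewrite /distinct_count /head_twice_count /= !big_seq1.
by rewrite distinct_countSS head_twice_countSS IHdist IHtwice.
Qed.

Lemma distinct_sizeSS_fib m :
  distinct_size m.+3 = distinct_size m.+2 + distinct_size m.+1 + fib m.+1.
Proof.
by rewrite distinct_sizeSS head_twice_sizeSS (proj1 (distinct_count_fib _)) addnA.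
Qed.

(** * Exactly one even part, exactly one repeated part *)

Definition num_even_vals (s : seq nat) := \sum_(v <- undup s) nat_of_bool (~~ odd v).

Lemma num_even_vals_cons x t :
  num_even_vals (x :: t) = num_even_vals t + (~~ odd x && (x \notin t)).
Proof.
rewrite /num_even_vals /=; case: ifP => x_t; first by rewrite andbF addn0.
by rewrite big_cons andbT addnC.
Qed.

Definition g1_state e o r M := \sum_(s <- perim_parts M) nat_of_bool
  [&& num_even_vals (behead s) == e, odd (head 0 s) == o & (head 0 s \in behead s) == r].

Local Ltac case_head_stats x t :=
  rewrite ?num_even_vals_cons /=; case: (odd x); case: (x \in t);
  case: (num_even_vals t) => [|[|?]] /=; rewrite ?addn0 //.

Lemma g1_state_fresh_head e o m :
  g1_state e o false m.+2 = g1_state e (~~ o) false m.+1 + g1_state e (~~ o) true m.+1.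
Proof.
rewrite /g1_state big_perim_partsSS big_perim_parts_eq0 => [|x t _]; last first.
  by rewrite /= mem_head !andbF.
rewrite add0n -big_split; apply: eq_big_perim_parts => x t p_xt /=.
rewrite (negbTE (path_geq_succ_notin p_xt)).
by case: (odd x); case: (x \in t); case: o; case: (num_even_vals t == e).
Qed.

Lemma g1_state_odd_repeated e m :
  g1_state e true true m.+2 = g1_state e true false m.+1 + g1_state e true true m.+1.
Proof.
rewrite /g1_state big_perim_partsSS [X in _ + X]big_perim_parts_eq0 => [|x t p_xt]; last first.
  by rewrite /= (negbTE (path_geq_succ_notin p_xt)) !andbF.
rewrite addn0 -big_split; apply: eq_big_perim_parts => x t _ /=.
rewrite mem_head num_even_vals_cons; case: (odd x) => /=; rewrite ?addn0 ?andbF //.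
by case: (x \in t); case: (num_even_vals t == e).
Qed.

Lemma g1_state_even_repeated0 m : g1_state 0 false true m.+2 = g1_state 0 false true m.+1.
Proof.
rewrite /g1_state big_perim_partsSS [X in _ + X]big_perim_parts_eq0 => [|x t p_xt]; last first.
  by rewrite /= (negbTE (path_geq_succ_notin p_xt)) !andbF.
rewrite addn0; apply: eq_big_perim_parts => x t _ /=; rewrite mem_head; case_head_stats x t.
Qed.

Lemma g1_state_even_repeated1 m :
  g1_state 1 false true m.+2 = g1_state 1 false true m.+1 + g1_state 0 false false m.+1.
Proof.
rewrite /g1_state big_perim_partsSS [X in _ + X]big_perim_parts_eq0 => [|x t p_xt]; last first.
  by rewrite /= (negbTE (path_geq_succ_notin p_xt)) !andbF.
rewrite addn0 -big_split; apply: eq_big_perim_parts => x t _ /=.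
rewrite mem_head; case_head_stats x t.
Qed.

Lemma g1_state_values n :
  [/\ g1_state 0 false false n.+2 = fib n.+1, g1_state 0 true false n.+2 = fib n,
      g1_state 0 true true n.+2 = fib n.+1, g1_state 0 false true n.+2 = 0 &
    [/\ g1_state 1 false false n.+2 + fib n.+2 = fib_conv n.+1 + 1,
      g1_state 1 false true n.+2 + 1 = fib n.+2, g1_state 1 true false n.+2 = fib_conv n
      & g1_state 1 true true n.+2 + fib n.+2 = fib_conv n.+1 + 1]].
Proof.
elim: n => [|n [s00 s10 s11 s01 [t00 t01 t10 t11]]].
  by rewrite /g1_state /= !big_cons !big_nil /num_even_vals /= !big_cons !big_nil.
rewrite !(g1_state_fresh_head _ _ n.+1) !(g1_state_odd_repeated _ n.+1).
rewrite g1_state_even_repeated0 g1_state_even_repeated1 -[~~ true]/false -[~~ false]/true.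
rewrite s00 s10 s11 s01.
have := fibSS n.+1; have := fib_convSS n; have := fibSS n.
by split; [lia|lia|lia|lia|split; lia].
Qed.

Definition one_even_count M := \sum_(s <- perim_parts M) nat_of_bool (num_even_vals s == 1).

Lemma one_even_count_states M : one_even_count M = g1_state 1 true false M +
  g1_state 1 true true M + g1_state 1 false true M + g1_state 0 false false M.
Proof.
rewrite /one_even_count /g1_state -!big_split.
by apply: eq_big_perim_parts => x t _ /=; case_head_stats x t.
Qed.

Lemma one_even_count_fib_conv M : one_even_count M = fib_conv M.
Proof.
case: M => [|[|n]]; first by rewrite /one_even_count /= big_nil.
  by rewrite /one_even_count /= big_seq1 /num_even_vals /= big_seq1.
rewrite one_even_count_states; case: (g1_state_values n) => -> _ _ _ [_ ? -> ?].
by have := fibSS n; have := fib_convSS n; lia.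
Qed.

Definition num_repeated_vals (s : seq nat) :=
  \sum_(v <- undup s) nat_of_bool (1 < count_mem v s).

Lemma num_repeated_vals_cons x t :
  num_repeated_vals (x :: t) = num_repeated_vals t + (count_mem x t == 1).
Proof.
rewrite /num_repeated_vals /=; case: ifP => x_t.
  have x_ut : x \in undup t by rewrite mem_undup.
  rewrite !(bigD1_seq x x_ut (undup_uniq t)) /= eqxx.
  under eq_bigr => v /negbTE v_x do rewrite eq_sym v_x add0n.
  have : 0 < count_mem x t by rewrite -has_count has_pred1.
  by case: (count_mem x t) => [|[|c]] //= _; lia.
have x_t0 : count_mem x t = 0 by apply/eqP; rewrite -leqn0 leqNgt -has_count has_pred1 x_t.
rewrite big_cons eqxx x_t0 /= add0n addn0; apply: eq_big_seq => v; rewrite mem_undup => v_t.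
by have -> : (x == v) = false by apply/eqP => x_v; rewrite x_v v_t in x_t.
Qed.

Lemma path_geq_count_succ x t : path geq x t -> count_mem x.+1 t = 0.
Proof.
by move=> /path_geq_succ_notin x_t; apply/eqP; rewrite -leqn0 leqNgt -has_count has_pred1.
Qed.

(* [c = 2] stands for "at least twice". *)
Definition h1_state r c M := \sum_(s <- perim_parts M) nat_of_bool
  ((num_repeated_vals (behead s) == r) && (minn (count_mem (head 0 s) (behead s)) 2 == c)).

Local Ltac case_head_count x t :=
  rewrite num_repeated_vals_cons; case: (count_mem x t) => [|[|?]] /=;
  case: (num_repeated_vals t) => [|[|?]] /=; rewrite ?addn0 ?andbF.

Lemma h1_state_fresh_head r m :
  h1_state r 0 m.+2 = h1_state r 0 m.+1 + h1_state r 1 m.+1 + h1_state r 2 m.+1.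
Proof.
rewrite /h1_state big_perim_partsSS big_perim_parts_eq0 => [|x t _]; last first.
  by rewrite /= eqxx; case: (count_mem x t) => [|[|c]] //=; rewrite ?andbF.
rewrite add0n -!big_split; apply: eq_big_perim_parts => x t p_xt /=.
rewrite path_geq_count_succ //.
by case: (count_mem x t) => [|[|c]] /=; case: (num_repeated_vals t == r).
Qed.

Lemma h1_state_head_once r m : h1_state r 1 m.+2 = h1_state r 0 m.+1.
Proof.
rewrite /h1_state big_perim_partsSS [X in _ + X]big_perim_parts_eq0 => [|x t p_xt]; last first.
  by rewrite /= path_geq_count_succ // andbF.
by rewrite addn0; apply: eq_big_perim_parts => x t _ /=; rewrite eqxx; case_head_count x t.
Qed.

Lemma h1_state_head_twice0 m : h1_state 0 2 m.+2 = h1_state 0 2 m.+1.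
Proof.
rewrite /h1_state big_perim_partsSS [X in _ + X]big_perim_parts_eq0 => [|x t p_xt]; last first.
  by rewrite /= path_geq_count_succ // andbF.
by rewrite addn0; apply: eq_big_perim_parts => x t _ /=; rewrite eqxx; case_head_count x t.
Qed.

Lemma h1_state_head_twice1 m : h1_state 1 2 m.+2 = h1_state 1 2 m.+1 + h1_state 0 1 m.+1.
Proof.
rewrite /h1_state big_perim_partsSS [X in _ + X]big_perim_parts_eq0 => [|x t p_xt]; last first.
  by rewrite /= path_geq_count_succ // andbF.
rewrite addn0 -big_split.
by apply: eq_big_perim_parts => x t _ /=; rewrite eqxx; case_head_count x t.
Qed.

Lemma h1_state_values n :
  [/\ h1_state 0 0 n.+2 = fib n.+2, h1_state 0 1 n.+2 = fib n.+1, h1_state 0 2 n.+2 = 0 &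
    [/\ h1_state 1 0 n.+2 + fib n.+3 = fib_conv n.+2 + 1,
      h1_state 1 1 n.+2 + fib n.+2 = fib_conv n.+1 + 1
      & h1_state 1 2 n.+2 + 1 = fib n.+2]].
Proof.
elim: n => [|n [s0 s1 s2 [t0 t1 t2]]].
  by rewrite /h1_state /= !big_cons !big_nil /num_repeated_vals /= !big_cons !big_nil.
rewrite !(h1_state_fresh_head _ n.+1) !(h1_state_head_once _ n.+1).
rewrite (h1_state_head_twice0 n.+1) (h1_state_head_twice1 n.+1).
have := fibSS n.+2; have := fibSS n.+1; have := fib_convSS n.+1; have := fibSS n.
by split; [lia|lia|lia|split; lia].
Qed.

Definition one_repeated_count M :=
  \sum_(s <- perim_parts M) nat_of_bool (num_repeated_vals s == 1).

Lemma one_repeated_count_states M :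
  one_repeated_count M = h1_state 1 0 M + h1_state 1 2 M + h1_state 0 1 M.
Proof.
rewrite /one_repeated_count /h1_state -!big_split.
by apply: eq_big_perim_parts => x t _ /=; case_head_count x t.
Qed.

Lemma one_repeated_count_fib_conv M : one_repeated_count M = fib_conv M.
Proof.
case: M => [|[|n]]; first by rewrite /one_repeated_count /= big_nil.
  by rewrite /one_repeated_count /= big_seq1 /num_repeated_vals /= big_seq1.
rewrite one_repeated_count_states; case: (h1_state_values n) => _ -> _ [? _ ?].
by have := fibSS n; have := fibSS n.+1; have := fib_convSS n; lia.
Qed.

(** * From part tuples to part lists *)

Lemma card_set_sumb (T : finType) (p : pred T) :
  #|[set x | p x]| = \sum_(x : T) nat_of_bool (p x).
Proof. by rewrite -sum1_card big_mkcond; apply: eq_bigr => x _; rewrite inE; case: (p x). Qed.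

Lemma sumb_count (T : Type) (p : pred T) (s : seq T) :
  \sum_(x <- s) nat_of_bool (p x) = count p s.
Proof. by rewrite -sum1_count [RHS]big_mkcond; apply: eq_bigr => x _; case: (p x). Qed.

Lemma sum_ord_mem_undup n (l : seq nat) (f : pred nat) : all (gtn n) l ->
  \sum_(v < n) nat_of_bool ((val v \in l) && f v) = \sum_(v <- undup l) nat_of_bool (f v).
Proof.
move=> l_lt; rewrite -(big_mkord xpredT (fun v => nat_of_bool ((v \in l) && f v))).
rewrite [LHS](eq_bigr (fun v => if v \in l then nat_of_bool (f v) else 0)); last first.
  by move=> v _; case: (v \in l).
rewrite -big_mkcond -big_filter; apply/perm_big/uniq_perm.
- exact/filter_uniq/iota_uniq.
- exact: undup_uniq.
move=> v; rewrite mem_filter mem_iota mem_undup; case v_l: (v \in l) => //=.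
by move/allP: l_lt => /(_ v v_l); rewrite subn0 add0n.
Qed.

Lemma uniq_map_inj_in (T1 T2 : eqType) (f : T1 -> T2) (s : seq T1) :
  uniq (map f s) -> {in s &, injective f}.
Proof.
elim: s => [|a s IH] //= /andP[fa_notin uniq_fs] x y; rewrite !inE.
case/orP => [/eqP -> | x_s]; case/orP => [/eqP -> | y_s] // fxy.
- by move: fa_notin; rewrite fxy map_f.
- by move: fa_notin; rewrite -fxy map_f.
- exact: IH.
Qed.

Lemma max_path_geq x t : path geq x t -> \max_(y <- x :: t) y = x.
Proof.
move=> /path_geq_ub /allP t_le; rewrite big_cons; apply/maxn_idPl.
by apply/bigmax_leqP_seq => y /t_le.
Qed.

Lemma nth_filter_pos v : sorted geq v -> forall i, nth 0 v i = nth 0 [seq x <- v | 0 < x] i.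
Proof.
elim: v => [|x v IH] //= sorted_xv i.
case: (posnP x) => [x0 | x_gt0]; last by case: i => [|i] //=; apply/IH/path_sorted/sorted_xv.
have /allP v_le0 : all (geq 0) v by rewrite -x0; apply: path_geq_ub.
have -> : [seq y <- v | 0 < y] = [::].
  apply/eqP; rewrite -[_ == _]negbK -has_filter.
  by apply/hasPn => y /v_le0; rewrite /= leqn0 => /eqP ->.
rewrite x0 nth_nil; case: i => [|i] //=.
have [i_lt | i_ge] := ltnP i (size v); last by rewrite nth_default.
by apply/eqP; rewrite -leqn0; apply/v_le0/mem_nth.
Qed.

Section PartsOfPtuple.
Variable M : nat.
Implicit Types P Q : ptuple M.

Definition parts_seq P : seq nat := [seq val (P i) | i <- enum 'I_M].
Definition parts P : seq nat := [seq x <- parts_seq P | 0 < x].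

Lemma size_parts_seq P : size (parts_seq P) = M.
Proof. by rewrite size_map size_enum_ord. Qed.

Lemma nth_parts_seq P i (lt_iM : i < M) : nth 0 (parts_seq P) i = P (Ordinal lt_iM).
Proof.
rewrite (nth_map (Ordinal lt_iM)) ?size_enum_ord //; congr (val (P _)).
by apply: val_inj; rewrite /= nth_enum_ord.
Qed.

Lemma mem_parts_seq P (v : 'I_M.+1) : (val v \in parts_seq P) = [exists i, P i == v].
Proof.
apply/mapP/existsP => [[i _ /val_inj ->] | [i /eqP <-]]; first by exists i.
by exists i; rewrite ?mem_enum.
Qed.

Lemma big_enum_ord (R : Type) (op : SemiGroup.com_law R) (x : R) (F : 'I_M -> R) :
  \big[op/x]_(i <- enum 'I_M) F i = \big[op/x]_(i : 'I_M) F i.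
Proof. by rewrite big_enum; apply: eq_bigl => i; rewrite inE. Qed.

Lemma neq_ord0 (v : 'I_M.+1) : (v != ord0) = (0 < v).
Proof. by case: v => [[|k] lt_kM]. Qed.

Lemma parts_bounded P : all (gtn M.+1) (parts P).
Proof. by apply/allP => x; rewrite mem_filter => /andP[_ /mapP[i _ ->]]; apply: ltn_ord. Qed.

Lemma nparts_size P : nparts P = size (parts P).
Proof.
rewrite /nparts card_set_sumb -big_enum_ord size_filter -sumb_count /parts_seq big_map.
by apply: eq_bigr => i _; rewrite -lt0n.
Qed.

Lemma largest_max P : largest P = \max_(x <- parts P) x.
Proof.
rewrite /largest /parts big_filter /parts_seq big_map big_mkcond /= -big_enum_ord.
by rewrite [RHS]big_mkcond; apply: eq_bigr => i _; case: (P i) => [[|k] lt_kM].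
Qed.

Lemma sorted_parts_seq P : is_partition P -> sorted geq (parts_seq P).
Proof.
move=> /forallP decP; apply/(sortedP 0) => i; rewrite size_parts_seq => lt_i1M.
have lt_iM : i < M by apply: ltnW.
rewrite (nth_parts_seq P lt_i1M) (nth_parts_seq P lt_iM) /=.
move/forallP: (decP (Ordinal lt_iM)) => /(_ (Ordinal lt_i1M)) /implyP.
by apply; rewrite /= leqnSn.
Qed.

Lemma sorted_parts P : is_partition P -> sorted geq (parts P).
Proof. by move=> /sorted_parts_seq; apply: sorted_filter; apply: geq_trans. Qed.

Lemma nth_parts P : is_partition P -> forall i : 'I_M, val (P i) = nth 0 (parts P) i.
Proof.
move=> decP [i lt_iM].
by rewrite /= -(nth_parts_seq P lt_iM) (nth_filter_pos (sorted_parts_seq decP)).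
Qed.

Lemma perimM_perim_part P : is_partition P -> perimM P = perim_part M (parts P).
Proof.
move=> decP; have sorted_p := sorted_parts decP.
have pos_p : all (leq 1) (parts P) by apply: filter_all.
rewrite /perimM decP /perimeter nparts_size largest_max /=.
case: (parts P) sorted_p pos_p => [|x t] //= p_xt pos_xt.
by rewrite max_path_geq // p_xt pos_xt; congr (_ == _); lia.
Qed.

Lemma parts_inj P Q : perimM P -> perimM Q -> parts P = parts Q -> P = Q.
Proof.
move=> /and3P[decP _ _] /and3P[decQ _ _] eqPQ; apply/ffunP => i; apply: val_inj.
by rewrite (nth_parts decP) (nth_parts decQ) eqPQ.
Qed.

Definition ptuple_of (s : seq nat) : ptuple M := [ffun i : 'I_M => inord (nth 0 s i)].

Lemma val_ptuple_of s : all (gtn M.+1) s -> forall i : 'I_M, val (ptuple_of s i) = nth 0 s i.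
Proof.
move=> /allP s_lt i; rewrite ffunE /= inordK //.
by have [/(mem_nth 0)/s_lt | /(nth_default 0) ->] := ltnP i (size s).
Qed.

Lemma parts_seq_ptuple_of s : size s <= M -> all (gtn M.+1) s ->
  parts_seq (ptuple_of s) = s ++ nseq (M - size s) 0.
Proof.
move=> size_s s_lt; apply: (@eq_from_nth _ 0).
  by rewrite size_parts_seq size_cat size_nseq subnKC.
move=> i; rewrite size_parts_seq => lt_iM; rewrite nth_parts_seq val_ptuple_of // nth_cat.
by case: ltnP => // le_si; rewrite nth_default // nth_nseq if_same.
Qed.

Lemma parts_surj s : perim_part M s -> exists2 P, perimM P & parts P = s.
Proof.
case: s => [|x t] // /and3P[p_xt pos_xt /eqP size_xt].
have /allP t_le : all (geq x) t by apply: path_geq_ub.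
have xt_lt : all (gtn M.+1) (x :: t).
  by apply/allP => y; rewrite inE => /predU1P[-> | /t_le] /=; lia.
have parts_xt : parts (ptuple_of (x :: t)) = x :: t.
  rewrite /parts parts_seq_ptuple_of //; last by case/andP: pos_xt => /= x_gt0 _; lia.
  by rewrite filter_cat (all_filterP pos_xt) filter_nseq /= cats0.
have decP : is_partition (ptuple_of (x :: t)).
  apply/forallP => i; apply/forallP => j; apply/implyP => le_ij; rewrite !val_ptuple_of //.
  have [lt_j | /(nth_default 0) -> //] := ltnP j (size (x :: t)).
  have lt_i := leq_ltn_trans le_ij lt_j.
  exact: (@sorted_leq_nth _ _ geq_trans leqnn 0 (x :: t) p_xt _ _ lt_i lt_j le_ij).
exists (ptuple_of (x :: t)) => //.
by rewrite perimM_perim_part // parts_xt; apply/and3P; split=> //; apply/eqP.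
Qed.

Lemma big_perimM_parts (F : seq nat -> nat) :
  \sum_(P : ptuple M | perimM P) F (parts P) = \sum_(s <- perim_parts M) F s.
Proof.
rewrite -[LHS]big_filter.
transitivity (\sum_(s <- map parts [seq P <- index_enum (ptuple M) | perimM P]) F s).
  by rewrite big_map.
apply/perm_big/uniq_perm.
- rewrite map_inj_in_uniq ?filter_uniq ?index_enum_uniq // => P Q.
  by rewrite !mem_filter => /andP[perimP _] /andP[perimQ _]; apply: parts_inj.
- exact: uniq_perim_parts.
move=> s; rewrite mem_perim_parts; apply/mapP/idP => [[P] | /parts_surj[P perimP <-]].
  rewrite mem_filter => /andP[perimP _] ->.
  by case/and3P: (perimP) => decP _ _; rewrite -perimM_perim_part.
by exists P; rewrite // mem_filter perimP mem_index_enum.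
Qed.

Lemma odd_parts_all P : odd_parts P = all odd (parts P).
Proof.
rewrite /odd_parts /parts all_filter /parts_seq all_map.
apply/forallP/allP => [oddP i _ | oddP i]; [move: (oddP i) | move: (oddP i (mem_enum _ i))];
  by rewrite /= neq_ord0.
Qed.

Lemma distinct_parts_uniq P : distinct_parts P = uniq (parts P).
Proof.
have -> : parts P = map (fun i => val (P i)) [seq i <- enum 'I_M | 0 < P i].
  by rewrite /parts /parts_seq filter_map.
apply/idP/idP => [/forallP distP | /uniq_map_inj_in injP].
  rewrite map_inj_in_uniq; first exact/filter_uniq/enum_uniq.
  move=> i j; rewrite !mem_filter => /andP[Pi_gt0 _] _ Pij.
  apply/eqP/negPn/negP => ne_ij.
  move/forallP: (distP i) => /(_ j) /implyP; rewrite neq_ord0 Pi_gt0 ne_ij => /(_ isT).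
  by rewrite -val_eqE Pij eqxx.
apply/forallP => i; apply/forallP => j; apply/implyP => /andP[Pi_gt0 ne_ij].
apply/negP => /eqP Pij; move/negP: ne_ij; apply; apply/eqP/injP; last by rewrite Pij.
- by rewrite mem_filter mem_enum -neq_ord0 Pi_gt0.
- by rewrite mem_filter mem_enum -neq_ord0 -Pij Pi_gt0.
Qed.

Lemma card_even_values P : #|even_values P| = num_even_vals (parts P).
Proof.
rewrite /even_values card_set_sumb /num_even_vals -(@sum_ord_mem_undup M.+1) ?parts_bounded //.
apply: eq_bigr => v _; rewrite mem_filter mem_parts_seq neq_ord0.
by case: (0 < v); case: (odd v); case: [exists _, _].
Qed.

Lemma mult_count P (v : 'I_M.+1) : mult P v = count_mem (val v) (parts_seq P).
Proof.
rewrite /mult card_set_sumb -big_enum_ord /parts_seq count_map -sumb_count.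
by apply: eq_bigr => i _; rewrite /= val_eqE.
Qed.

Lemma card_repeated_values P : #|repeated_values P| = num_repeated_vals (parts P).
Proof.
rewrite /repeated_values card_set_sumb /num_repeated_vals.
rewrite -(@sum_ord_mem_undup M.+1) ?parts_bounded //.
apply: eq_bigr => -[[|k] lt_kM] _; first by rewrite neq_ord0 mem_filter.
have count_parts : count_mem k.+1 (parts P) = count_mem k.+1 (parts_seq P).
  by rewrite /parts count_filter; apply: eq_count => y /=; case: (eqVneq y k.+1) => // ->.
rewrite mult_count neq_ord0 mem_filter /= count_parts.
case: ltnP => [two_le | _]; rewrite ?andbF ?andbT //.
by rewrite -has_pred1 has_count (ltnW two_le).
Qed.

End PartsOfPtuple.

Lemma g_odd_size M : g M = odd_size M.
Proof.
rewrite /g /odd_size -big_perimM_parts big_mkcondr.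
by apply: eq_bigr => P _; rewrite odd_parts_all nparts_size; case: (all odd _); rewrite ?mul1n.
Qed.

Lemma h_distinct_size M : h M = distinct_size M.
Proof.
rewrite /h /distinct_size -big_perimM_parts big_mkcondr.
by apply: eq_bigr => P _; rewrite distinct_parts_uniq nparts_size; case: (uniq _); rewrite ?mul1n.
Qed.

Lemma card_perimM (M : nat) (p : pred (ptuple M)) :
  #|[set P | perimM P && p P]| = \sum_(P : ptuple M | perimM P) nat_of_bool (p P).
Proof. by rewrite card_set_sumb [RHS]big_mkcond; apply: eq_bigr => P _; case: (perimM P). Qed.

Lemma g1_fib_conv M : g1 M = fib_conv M.
Proof.
rewrite -one_even_count_fib_conv /g1 /one_even_count card_perimM -big_perimM_parts.
by apply: eq_bigr => P _; rewrite /G1_prop card_even_values.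
Qed.

Lemma h1_fib_conv M : h1 M = fib_conv M.
Proof.
rewrite -one_repeated_count_fib_conv /h1 /one_repeated_count card_perimM -big_perimM_parts.
by apply: eq_bigr => P _; rewrite /H1_prop card_repeated_values.
Qed.

(** * Generating functions *)

Local Open Scope ring_scope.

Lemma coef_den j :
  den`_j = match j with 0 => 1 | 1 => -2 | 2 => -1 | 3 => 2 | 4 => 1 | _ => 0 end.
Proof.
have -> : den = 1 - 2%:R *: 'X - 'X^2 + 2%:R *: 'X^3 + 'X^4 by rewrite /den !scaler_nat; ring.
by rewrite !coefE; case: j => [|[|[|[|[|j]]]]].
Qed.

(* The hypotheses on P say that P agrees with den * A up to degree 4. *)
Lemma series_eq_den (a : nat -> nat) (P : {poly int}) : den_recurrence a ->
  P`_0 = 0 -> P`_1 = (a 1%N)%:R -> P`_2 = (a 2%N)%:R - 2%:R * (a 1%N)%:R ->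
  P`_3 = (a 3%N)%:R - 2%:R * (a 2%N)%:R - (a 1%N)%:R ->
  P`_4 = (a 4%N)%:R - 2%:R * (a 3%N)%:R - (a 2%N)%:R + 2%:R * (a 1%N)%:R ->
  (forall n, (4 < n)%N -> P`_n = 0) -> series_eq a P den.
Proof.
move=> a_rec P0 P1 P2 P3 P4 P_gt4 N; apply/polyP => i; rewrite !coef_take_poly.
case: ifP => // lt_iN; rewrite coefM.
pose b k : int := if k == 0%N then 0 else (a k)%:R.
have -> : \sum_(j < i.+1) den`_j * (trunc_series a N)`_(i - j) =
           \sum_(j < i.+1) den`_j * b (i - j)%N.
  by apply: eq_bigr => j _; rewrite coef_poly ifT //; have := ltn_ord j; lia.
rewrite -(big_mkord xpredT (fun j => den`_j * b (i - j)%N)).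
case: i lt_iN => [|[|[|[|[|k]]]]] _.
- by rewrite big_nat1 P0 /b mulr0.
- by rewrite /index_iota /= !big_cons big_nil !coef_den /b /= P1; ring.
- by rewrite /index_iota /= !big_cons big_nil !coef_den /b /= P2; ring.
- by rewrite /index_iota /= !big_cons big_nil !coef_den /b /= P3; ring.
- by rewrite /index_iota /= !big_cons big_nil !coef_den /b /= P4; ring.
rewrite (big_cat_nat (n := 5)) //= [X in _ + X]big_nat_cond [X in _ + X]big1 ?addr0; last first.
  by move=> [|[|[|[|[|j]]]]] /andP[/andP[] _] //; rewrite coef_den mul0r.
rewrite P_gt4 // /index_iota /= !big_cons big_nil !coef_den !subSS !subn0 /b /=.
have := congr1 (fun n : nat => n%:R : int) (a_rec k.+1 isT); rewrite ?natrD ?natrM /=.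
lra.
Qed.

Lemma g_series : series_eq g ('X - 'X^3) den.
Proof.
have g_rec n : g n.+3 = (g n.+2 + g n.+1 + fib (n + 2))%N.
  by rewrite !g_odd_size odd_sizeSS_fib addn2.
have [g_1 g_2] : g 1 = 1%N /\ g 2 = 2%N by rewrite !g_odd_size /odd_size /= !big_cons !big_nil.
apply: series_eq_den (den_recurrence_fib_driven g_rec) _ _ _ _ _ _ => [||||| n n_gt4];
  rewrite ?(g_rec 1) ?(g_rec 0) ?g_1 ?g_2 !coefE //.
by case: n n_gt4 => [|[|[|[|[|n]]]]].
Qed.

Lemma h_series : series_eq h ('X - 'X^2) den.
Proof.
have h_rec n : h n.+3 = (h n.+2 + h n.+1 + fib (n + 1))%N.
  by rewrite !h_distinct_size distinct_sizeSS_fib addn1.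
have [h_1 h_2] : h 1 = 1%N /\ h 2 = 1%N.
  by rewrite !h_distinct_size /distinct_size /= !big_cons !big_nil.
apply: series_eq_den (den_recurrence_fib_driven h_rec) _ _ _ _ _ _ => [||||| n n_gt4];
  rewrite ?(h_rec 1) ?(h_rec 0) ?h_1 ?h_2 !coefE //.
by case: n n_gt4 => [|[|[|[|[|n]]]]].
Qed.

Lemma fib_conv_series (a : nat -> nat) : a =1 fib_conv -> series_eq a ('X^2) den.
Proof.
move=> a_conv; have a_rec n : a n.+3 = (a n.+2 + a n.+1 + fib (n + 2))%N.
  by rewrite !a_conv fib_convSS addn2.
apply: series_eq_den (den_recurrence_fib_driven a_rec) _ _ _ _ _ _ => [||||| n n_gt4];
  rewrite ?(a_rec 1) ?(a_rec 0) ?a_conv !coefE //.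
by case: n n_gt4 => [|[|[|[|[|n]]]]].
Qed.

Theorem mainTheorem3 :
  [/\ series_eq g ('X - 'X^3) den,
      series_eq h ('X - 'X^2) den,
      series_eq g1 ('X^2) den,
      series_eq h1 ('X^2) den
    & forall M : nat, (1 <= M)%N -> g1 M = h1 M].
Proof.
split; [exact: g_series | exact: h_series | exact/fib_conv_series/g1_fib_conv
  | exact/fib_conv_series/h1_fib_conv | by move=> M _; rewrite g1_fib_conv h1_fib_conv].
Qed.
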